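(* Let $n\ge 3$, let $d_1,\dots,d_{n-1}>0$, and let $k_1,\dots,k_{n-1}$ be real gains with $k_1+1>k_2$, $k_i>k_{i+1}$ for $i=2,\ldots,n-2$, and $k_{n-1}>0$. Define $f:\mathbb{R}^{n-1}\to\mathbb{R}^{n-1}$, writing $s_i(z)=\mathrm{sgn}(z_i)\,\mathrm{sgn}(|z_i|-d_i)$, by $$f_1(z)=-(k_1+1)s_1(z)+k_2 s_2(z),$$ $$f_i(z)=s_{i-1}(z)-(k_i+1)s_i(z)+k_{i+1}s_{i+1}(z),\quad i=2,\ldots,n-2,$$ $$f_{n-1}(z)=s_{n-2}(z)-(k_{n-1}+1)s_{n-1}(z).$$ Then the set of equilibria $\{z\in\mathbb{R}^{n-1}:\mathbf{0}\in\mathcal{K}(f(z))\}$ equals $$\mathcal{E}=\Big\{z\in\mathbb{R}^{n-1}:\sum_{i=1}^{n-1}|z_i|\,\big||z_i|-d_i\big|=0\Big\}.$$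
   Context: The sign function is $\mathrm{sgn}(z)=+1$ if $z\ge 0$ and $\mathrm{sgn}(z)=-1$ if $z<0$. For a (possibly discontinuous) vector field $f$, the Krasowskii regularization is $\mathcal{K}(f(z))=\bigcap_{\delta>0}\overline{\mathrm{co}}\,(f(B(z,\delta)))$, where $\overline{\mathrm{co}}$ denotes the closed convex hull and $B(z,\delta)$ the open ball of radius $\delta$ centered at $z$. (The vector field $f$ arises as the dynamics of relative positions $z_i=x_i-x_{i+1}$ of $n$ agents on a line.) *)

From HB Require Import structures.
From mathcomp Require Import all_boot all_order all_algebra.
From mathcomp Require Import all_classical all_reals all_analysis.
Set Implicit Arguments. Unset Strict Implicit. Unset Printing Implicit Defensive.
Import Order.TTheory GRing.Theory Num.Theory.
Import numFieldNormedType.Exports.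
Local Open Scope classical_set_scope.
Local Open Scope ring_scope.

Definition sgn {R : realType} (x : R) : R := if 0 <= x then 1 else -1.

Definition conv_hull {R : realType} {m : nat} (A : set 'rV[R]_m) : set 'rV[R]_m :=
  [set x | exists (l : nat) (w : 'I_l -> R) (p : 'I_l -> 'rV[R]_m),
     (forall i, 0 <= w i) /\ \sum_(i < l) w i = 1 /\
     (forall i, A (p i)) /\ x = \sum_(i < l) w i *: p i].

Definition cl_conv {R : realType} {m : nat} (A : set 'rV[R]_m) : set 'rV[R]_m :=
  closure (conv_hull A).

Definition krasowskii {R : realType} {m : nat} (F : 'rV[R]_m -> 'rV[R]_m)
  (z : 'rV[R]_m) : set 'rV[R]_m :=
  \bigcap_(delta in [set e : R | 0 < e]) cl_conv (F @` ball z delta).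

(* 1-based component access: zc z i = z_i for 1 <= i <= m *)
Definition zc {R : realType} {m : nat} (z : 'rV[R]_m) (i : nat) : R :=
  match @insub nat (fun j => (j < m)%N) 'I_m i.-1 with
  | Some j => z ord0 j
  | None => 0
  end.

(* s_i(z) = sgn(z_i) sgn(|z_i| - d_i) for 1 <= i <= m, and 0 outside this
   range (so that the boundary terms of f_1 and f_{n-1} vanish). *)
Definition s_fun {R : realType} {m : nat} (d : nat -> R) (z : 'rV[R]_m) (i : nat) : R :=
  if (1 <= i <= m)%N then sgn (zc z i) * sgn (`|zc z i| - d i) else 0.

Definition f_comp {R : realType} {m : nat} (k d : nat -> R) (z : 'rV[R]_m) (i : nat) : R :=
  s_fun d z i.-1 - (k i + 1) * s_fun d z i + k i.+1 * s_fun d z i.+1.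

Definition f_field {R : realType} {m : nat} (k d : nat -> R) (z : 'rV[R]_m) : 'rV[R]_m :=
  \row_(j < m) f_comp k d z j.+1.

From HB Require Import structures.
From mathcomp Require Import all_boot all_order all_algebra.
From mathcomp Require Import all_classical all_reals all_analysis.
From mathcomp Require Import ring lra zify.
Import Order.TTheory GRing.Theory Num.Theory.
Import numFieldNormedType.Exports.
Local Open Scope classical_set_scope.
Local Open Scope ring_scope.

(* The field factors as [f(z) = s(z) M] with [s(z) = (s_1(z), ..., s_{n-1}(z))]
   and [M] the tridiagonal matrix of the gains. The gain inequalities make [M]
   invertible: a nonzero null vector [t], normalised by [t_{n-1} > 0], would satisfy
   [0 < t_{n-1} < t_{n-2} < ... < t_1] by downward induction on the recurrence,
   contradicting its first equation.
   If some [z_j] is neither [0] nor [+-d_j], then [s_j] is constant [+-1] near [z],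
   so the [j]-th coordinate of [f M^-1] is [+-1] on the closed convex hull of the
   values of [f] near [z], which cannot contain [0]. If every [z_j] lies in
   [{0, +-d_j}], an arbitrarily small move of each coordinate switches every [s_j],
   so [-f(z)] is also a nearby value of [f] and [0 = (f(z) + (-f(z)))/2]. *)

Lemma nat_ind_down (P : nat -> Prop) (lo hi : nat) :
  P hi -> (forall i, (lo < i <= hi)%N -> P i -> P i.-1) ->
  forall i, (lo <= i <= hi)%N -> P i.
Proof.
move=> Phi step.
have down p : (p <= hi - lo)%N -> P (hi - p)%N.
  elim: p => [|p IHp] hp; first by rewrite subn0.
  have -> : (hi - p.+1 = (hi - p).-1)%N by lia.
  by apply: step; [lia | apply: IHp; lia].
by move=> i hi_i; have := down (hi - i)%N; rewrite subKn; [apply; lia | lia].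
Qed.

Section TridiagonalRecurrence.
Context {R : realFieldType} {m : nat} {k : nat -> R}.
Hypotheses (m_ge2 : (2 <= m)%N) (k12 : k 2%N < k 1%N + 1)
  (k_decr : forall i, (2 <= i < m)%N -> k i.+1 < k i) (k_last : 0 < k m).

Lemma gains_gt0 i : (2 <= i <= m)%N -> 0 < k i.
Proof.
apply: (nat_ind_down (fun i => 0 < k i)) => // {}i /andP[i2 im] ki.
have := k_decr i.-1; rewrite prednK; last lia.
by move=> /(_ ltac:(lia)); apply: lt_trans.
Qed.

Section NullSolution.
Variable t : nat -> R.
Hypotheses (t_first : t 0%N = 0) (t_after_last : t m.+1 = 0)
  (t_rec : forall i, (1 <= i <= m)%N ->
     t i.-1 - (k i + 1) * t i + k i.+1 * t i.+1 = 0).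

Lemma tridiag_null_last_le0 : t m <= 0.
Proof.
rewrite leNgt; apply/negP => tm_gt0.
have t_decr i : (2 <= i <= m)%N -> 0 < t i < t i.-1.
  apply: (nat_ind_down (fun i => 0 < t i < t i.-1)) => {i}.
    have := t_rec m; rewrite t_after_last mulr0 addr0.
    move=> /(_ ltac:(lia)) rec_m; apply/andP; split=> //.
    have := mulr_gt0 k_last tm_gt0; lra.
  move=> i /andP[i2 im] /andP[ti_gt0 ti_lt]; apply/andP; split.
    exact: lt_trans ti_gt0 ti_lt.
  have := t_rec i.-1; rewrite prednK; last lia.
  have := k_decr i.-1; rewrite prednK; last lia.
  have := gains_gt0 i; move=> /(_ ltac:(lia)) ki_gt0 /(_ ltac:(lia)) k_lt.
  move=> /(_ ltac:(lia)) rec_i.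
  have : 0 < (k i.-1 - k i) * t i.-1 by rewrite mulr_gt0 ?subr_gt0 ?(lt_trans ti_gt0).
  have : 0 < k i * (t i.-1 - t i) by rewrite mulr_gt0 ?subr_gt0.
  lra.
have /andP[t2_gt0 t2_lt] := t_decr 2%N ltac:(lia).
have := t_rec 1%N; rewrite t_first => /(_ ltac:(lia)) rec_1.
have k2_gt0 := gains_gt0 2%N ltac:(lia).
have : 0 < (k 1%N + 1 - k 2%N) * t 1%N.
  by rewrite mulr_gt0 ?subr_gt0 ?(lt_trans t2_gt0).
have : 0 < k 2%N * (t 1%N - t 2%N) by rewrite mulr_gt0 ?subr_gt0.
lra.
Qed.
End NullSolution.

Lemma tridiag_null_eq0 (t : nat -> R) :
  t 0%N = 0 -> t m.+1 = 0 ->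
  (forall i, (1 <= i <= m)%N -> t i.-1 - (k i + 1) * t i + k i.+1 * t i.+1 = 0) ->
  forall i, (1 <= i <= m)%N -> t i = 0.
Proof.
move=> t_first t_after_last t_rec.
have t_last : t m = 0.
  apply/le_anti; rewrite tridiag_null_last_le0 //= -oppr_le0.
  apply: (@tridiag_null_last_le0 (fun i => - t i)); rewrite ?t_first ?t_after_last ?oppr0 //.
  by move=> i /t_rec; lra.
suff two_zeros i : (1 <= i <= m)%N -> t i = 0 /\ t i.+1 = 0.
  by move=> i /two_zeros[].
apply: (nat_ind_down (fun i => t i = 0 /\ t i.+1 = 0)) => // {}i i_range [ti0 tSi0].
have := t_rec i; rewrite ti0 tSi0 prednK; last lia.
by move=> /(_ ltac:(lia)); rewrite !mulr0 !subr0 addr0.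
Qed.

End TridiagonalRecurrence.

Section TridiagonalMap.
Context {R : realType} {m : nat}.
Implicit Types (u v : 'rV[R]_m) (k d : nat -> R).

(* [zc u 0 = zc u 1], so [zc] cannot serve as the zero-padded sequence of coordinates. *)
Definition pad0 u (i : nat) : R := if (1 <= i <= m)%N then zc u i else 0.

Lemma pad0_ord u (j : 'I_m) : pad0 u j.+1 = u ord0 j.
Proof.
rewrite /pad0 /zc ltn_ord /=; case: insubP => [j' _ j'E|]; last by rewrite ltn_ord.
by congr (u ord0 _); apply: val_inj.
Qed.

Lemma pad0D (a : R) u v i : pad0 (a *: u + v) i = a * pad0 u i + pad0 v i.
Proof.
rewrite /pad0 /zc; case: ifP => _; last by rewrite mulr0 addr0.
by case: insubP => [j _ _|_]; rewrite ?mxE ?mulr0 ?addr0.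
Qed.

Definition tridiag k u : 'rV[R]_m :=
  \row_(j < m) (pad0 u j - (k j.+1 + 1) * pad0 u j.+1 + k j.+2 * pad0 u j.+2).

Lemma tridiag_is_linear k : linear (tridiag k).
Proof. by move=> a u v; apply/rowP => j; rewrite !mxE !pad0D; ring. Qed.

HB.instance Definition _ k :=
  GRing.isLinear.Build R 'rV[R]_m 'rV[R]_m _ (tridiag k) (tridiag_is_linear k).

Definition sgn_row d (z : 'rV[R]_m) : 'rV[R]_m := \row_(j < m) s_fun d z j.+1.

Lemma pad0_sgn_row d z i : pad0 (sgn_row d z) i = s_fun d z i.
Proof.
rewrite /pad0; case: ifP => [/andP[i_ge1 i_le] | i_out]; last by rewrite /s_fun i_out.
rewrite /zc; case: insubP => [j _ jE|]; last by lia.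
by rewrite mxE jE prednK.
Qed.

Lemma f_field_tridiag k d z : f_field k d z = tridiag k (sgn_row d z).
Proof. by apply/rowP => j; rewrite !mxE /f_comp !pad0_sgn_row. Qed.

Variable k : nat -> R.
Hypotheses (m_ge2 : (2 <= m)%N) (k12 : k 2%N < k 1%N + 1)
  (k_decr : forall i, (2 <= i < m)%N -> k i.+1 < k i) (k_last : 0 < k m).

Lemma tridiag_inj u : tridiag k u = 0 -> u = 0.
Proof.
move=> tu0; apply/rowP => j; rewrite mxE -pad0_ord.
apply: (tridiag_null_eq0 m_ge2 k12 k_decr k_last (pad0 u)); last first.
- by rewrite ltn_ord.
- move=> i i_range; have ilt : (i.-1 < m)%N by lia.
  have := congr1 (fun w : 'rV[R]_m => w ord0 (Ordinal ilt)) tu0.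
  by rewrite !mxE /= prednK //; lia.
- by rewrite /pad0 ltnn andbF.
- by rewrite /pad0.
Qed.

Lemma tridiag_unitmx : lin1_mx (tridiag k) \in unitmx.
Proof.
rewrite -row_free_unit -kermx_eq0; apply/eqP/row_matrixP => i; rewrite row0.
apply: tridiag_inj; rewrite -mul_rV_lin1 -row_mul.
by have /sub_kermxP -> := submx_refl (kermx (lin1_mx (tridiag k))); rewrite row0.
Qed.

End TridiagonalMap.

Section SignBand.
Context {R : realType}.
Implicit Types (x y D e : R).

Definition sgn_band D x : R := sgn x * sgn (`|x| - D).

Lemma sgn_ge0 x : 0 <= x -> sgn x = 1.
Proof. by rewrite /sgn => ->. Qed.

Lemma sgn_lt0 x : x < 0 -> sgn x = -1.
Proof. by rewrite /sgn leNgt => ->. Qed.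

Lemma sgn_norm x : `|sgn x| = 1.
Proof. by rewrite /sgn; case: ifP; rewrite ?normrN normr1. Qed.

Lemma sgn_band_norm D x : `|sgn_band D x| = 1.
Proof. by rewrite normrM !sgn_norm mulr1. Qed.

Lemma sgn_near x y : `|y - x| < `|x| -> sgn y = sgn x.
Proof.
rewrite ltr_norml; case: (leP 0 x) => [x_ge0|x_lt0].
  by rewrite ger0_norm // => /andP[? ?]; rewrite !sgn_ge0 //; lra.
by rewrite ltr0_norm // => /andP[? ?]; rewrite !sgn_lt0 //; lra.
Qed.

Lemma sgn_band_near D x y :
  `|y - x| < Num.min `|x| `| `|x| - D| -> sgn_band D y = sgn_band D x.
Proof.
rewrite lt_min => /andP[near_x near_band]; congr (_ * _); apply: sgn_near => //.
rewrite opprB addrA subrK; exact: le_lt_trans (ler_dist_dist _ _) near_band.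
Qed.

Lemma sgn_band_flip D x e : 0 < e < D -> x = 0 \/ `|x| = D ->
  sgn_band D (x - e * sgn x) = - sgn_band D x.
Proof.
rewrite /sgn_band => /andP[e_gt0 e_ltD] [->|].
  rewrite (sgn_ge0 _ (lexx 0)) mulr1 sub0r normrN normr0 gtr0_norm //.
  by rewrite /sgn; do ! case: leP => ?; lra.
have D_gt0 : 0 < D := lt_trans e_gt0 e_ltD.
have De_gt0 : 0 < D - e by rewrite subr_gt0.
have [x_ge0 xD|x_lt0 xD] := leP 0 x.
  have {x_ge0 xD}-> : x = D by rewrite -xD ger0_norm.
  rewrite (sgn_ge0 _ (ltW D_gt0)) mulr1 !gtr0_norm //.
  by rewrite /sgn; do ! case: leP => ?; lra.
have {x_lt0 xD}-> : x = - D by rewrite -xD ltr0_norm ?opprK.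
rewrite (sgn_lt0 (- D)) ?oppr_lt0 // mulrN1 opprK normrN (gtr0_norm D_gt0).
rewrite ltr0_norm; last lra.
by rewrite /sgn; do ! case: leP => ?; lra.
Qed.

End SignBand.

Section ConvexHull.
Context {R : realType} {m : nat}.
Implicit Types A : set 'rV[R]_m.

Lemma ball_rowP (z w : 'rV[R]_m) e :
  ball z e w <-> 0 < e /\ forall i, `|z ord0 i - w ord0 i| < e.
Proof.
split=> [[e_gt0 zw]|[e_gt0 zw]]; split=> // i; first exact: zw ord0 i.
by move=> j; rewrite (ord1 i); exact: zw.
Qed.

Lemma conv_hull_opp A x : A x -> A (- x) -> conv_hull A 0.
Proof.
move=> Ax ANx; exists 2%N, (fun=> 1 / 2), (fun i => if val i == 0%N then x else - x).
split; first by move=> i; rewrite divr_ge0.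
split; first by rewrite big_ord_recl big_ord1; lra.
split; first by move=> i; case: ifP.
by rewrite big_ord_recl big_ord1 /= scalerN subrr.
Qed.

Lemma continuous_mulmx_coord {p} (N : 'M[R]_(m, p)) j :
  continuous (fun x : 'rV[R]_m => (x *m N) ord0 j).
Proof.
have -> : (fun x : 'rV[R]_m => (x *m N) ord0 j) = fun x => \sum_l x ord0 l * N l j.
  by apply/funext => x; rewrite mxE.
apply: continuous_big => [|l _ x]; first exact: add_continuous.
by apply: continuousM; [exact: coord_continuous | exact: cst_continuous].
Qed.

Lemma cl_conv_mulmx_coord {p A} {N : 'M[R]_(m, p)} {j} {c : R} :
  (forall a, A a -> (a *m N) ord0 j = c) -> forall x, cl_conv A x -> (x *m N) ord0 j = c.
Proof.
move=> A_level; pose level := [set x : 'rV[R]_m | (x *m N) ord0 j = c].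
have conv_level : conv_hull A `<=` level.
  move=> _ [l [w [a [_ [w_sum1 [Aa ->]]]]]]; rewrite /level /= mulmx_suml summxE.
  under eq_bigr do rewrite -scalemxAl mxE A_level //.
  by rewrite -mulr_suml w_sum1 mul1r.
have : closed level.
  exact: (continuous_closedP _).1 (continuous_mulmx_coord N j) _ (@closed_eq _ c).
by move=> closed_level x /(closureS conv_level); exact: closed_level.
Qed.

End ConvexHull.

Section Krasowskii.
Context {R : realType} {m : nat} {k d : nat -> R}.

Lemma sgn_row_ord (z : 'rV[R]_m) (j : 'I_m) :
  sgn_row d z ord0 j = sgn_band (d j.+1) (z ord0 j).
Proof. by rewrite mxE /s_fun ltn_ord -pad0_ord /pad0 ltn_ord. Qed.

Lemma f_field_mulmx (z : 'rV[R]_m) : f_field k d z = sgn_row d z *m lin1_mx (tridiag k).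
Proof. by rewrite f_field_tridiag mul_rV_lin1. Qed.

Lemma krasowskii_f_field_0 (z : 'rV[R]_m) :
  (forall i : 'I_m, 0 < d i.+1) ->
  (forall i : 'I_m, z ord0 i = 0 \/ `|z ord0 i| = d i.+1) ->
  krasowskii (f_field k d) z 0.
Proof.
move=> d_gt0 z_switch delta /= delta_gt0; apply: subset_closure.
pose e (i : 'I_m) := Num.min delta (d i.+1) / 2.
have e_range (i : 'I_m) : 0 < e i < d i.+1.
  have : Num.min delta (d i.+1) <= d i.+1 by rewrite ge_min lexx orbT.
  by rewrite /e divr_gt0 ?lt_min ?delta_gt0 ?d_gt0 //=; have := d_gt0 i; lra.
pose w := \row_(i < m) (z ord0 i - e i * sgn (z ord0 i)).
have sgn_row_w : sgn_row d w = - sgn_row d z.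
  by apply/rowP => i; rewrite [RHS]mxE !sgn_row_ord mxE sgn_band_flip.
apply: (conv_hull_opp _ (f_field k d z)); first by exists z => //; exact: ballxx.
exists w; last by rewrite !f_field_mulmx sgn_row_w mulNmx.
apply/ball_rowP; split => // i; rewrite mxE opprB addrC subrK normrM sgn_norm mulr1.
have /andP[e_gt0 _] := e_range i; rewrite gtr0_norm //.
have : Num.min delta (d i.+1) <= delta by rewrite ge_min lexx.
by rewrite /e; lra.
Qed.

Hypotheses (m_ge2 : (2 <= m)%N) (k12 : k 2%N < k 1%N + 1)
  (k_decr : forall i, (2 <= i < m)%N -> k i.+1 < k i) (k_last : 0 < k m).

(* On a ball around [z], the [j]-th coordinate of [f_field k d w *m M^-1] is the
   constant [s_j(z) = +-1]; by linearity and continuity so it is on the closed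
   convex hull, which therefore misses [0]. *)
Lemma not_krasowskii_f_field_0 {z : 'rV[R]_m} {j : 'I_m} :
  z ord0 j != 0 -> `|z ord0 j| != d j.+1 -> ~ krasowskii (f_field k d) z 0.
Proof.
move=> zj_neq0 zj_neqd K0.
pose delta := Num.min `|z ord0 j| `| `|z ord0 j| - d j.+1|.
have delta_gt0 : 0 < delta by rewrite lt_min !normr_gt0 zj_neq0 subr_eq0 zj_neqd.
pose M := lin1_mx (@tridiag R m k).
have sgn_const a : (f_field k d @` ball z delta) a ->
    (a *m invmx M) ord0 j = sgn_band (d j.+1) (z ord0 j).
  move=> [w /ball_rowP[_ zw] <-]; rewrite f_field_mulmx mulmxK ?tridiag_unitmx //.
  by rewrite sgn_row_ord; apply: sgn_band_near; rewrite distrC.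
have := cl_conv_mulmx_coord sgn_const _ (K0 delta delta_gt0).
by rewrite mul0mx mxE => /(congr1 Num.norm); rewrite sgn_band_norm normr0; lra.
Qed.

End Krasowskii.

Theorem proposition1 (R : realType) (n : nat) (k d : nat -> R) :
  (3 <= n)%N ->
  (forall i : nat, (1 <= i <= n.-1)%N -> 0 < d i) ->
  k 1%N + 1 > k 2%N ->
  (forall i : nat, (2 <= i <= n - 2)%N -> k i > k i.+1) ->
  k n.-1 > 0 ->
  [set z : 'rV[R]_(n.-1) | krasowskii (f_field k d) z 0] =
  [set z : 'rV[R]_(n.-1) | \sum_(i < n.-1) `|z ord0 i| * `| `|z ord0 i| - d i.+1| = 0].
Proof.
move=> n_ge3 d_gt0 k12 k_decr k_last.
have m_ge2 : (2 <= n.-1)%N by lia.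
have k_decr_lt i : (2 <= i < n.-1)%N -> k i.+1 < k i by move=> i_range; apply: k_decr; lia.
have d_gt0_ord (i : 'I_n.-1) : 0 < d i.+1 by apply: d_gt0; rewrite ltn_ord.
have termP (z : 'rV[R]_n.-1) i :
    `|z ord0 i| * `| `|z ord0 i| - d i.+1| = 0 <-> z ord0 i = 0 \/ `|z ord0 i| = d i.+1.
  split => [/eqP|[->|->]]; last by rewrite subrr normr0 mulr0.
    by rewrite mulf_eq0 !normr_eq0 subr_eq0 => /orP[] /eqP; [left | right].
  by rewrite normr0 mul0r.
apply/seteqP; split => z /=.
- move=> K0; apply/eqP; rewrite psumr_eq0 => [|i _]; last by rewrite mulr_ge0.
  apply/allP => i _; apply/implyP => _; apply/eqP/termP.
  have [zi0|zi_neq0] := eqVneq (z ord0 i) 0; first by left.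
  have [|zi_neqd] := eqVneq `|z ord0 i| (d i.+1); first by right.
  by case: (not_krasowskii_f_field_0 m_ge2 k12 k_decr_lt k_last zi_neq0 zi_neqd K0).
- move/eqP; rewrite psumr_eq0 => [/allP sum0|i _]; last by rewrite mulr_ge0.
  apply: krasowskii_f_field_0 d_gt0_ord _ => i; apply/termP/eqP.
  by have := sum0 i (mem_index_enum i).
Qed.
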